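(* Let $n\ge 4$, let $r_1,r_2,r_3\in\mathbb{Z}_+$ with $r_1+r_2+r_3=n-1$, and let $\alpha_1,\alpha_2,\alpha_3$ be reals with $-1<\alpha_1<1$, $0\le\alpha_2,\alpha_3<1$, $\alpha_1+\alpha_2+\alpha_3=1$, $r_1+\alpha_1\ge r_2+\alpha_2$ and $r_1+\alpha_1\ge r_3+\alpha_3$. Then $$\mathfrak{L}_n(r_1,r_2,r_3,\alpha_1,\alpha_2,\alpha_3)\le \mathfrak{L}_n(n-1,0,0,\alpha_1,\alpha_2,\alpha_3)+2^{2n/3}(10+2\ln n).$$
   Context: Points of a triangle are identified with barycentric coordinates $\lambda=(\lambda_1,\lambda_2,\lambda_3)$, $\lambda_r\ge0$, $\sum\lambda_r=1$. For an integer $n\ge1$ let $I=\{i=(i_1,i_2,i_3)\in\mathbb{Z}_+^3: i_1+i_2+i_3=n\}$, and let $l_i(\lambda)=\prod_{s=1}^{3}\frac{1}{i_s!}\prod_{t=0}^{i_s-1}(n\lambda_s-t)$ (the Lagrange fundamental polynomials for the equally spaced nodes $i/n$, $i\in I$). The Lebesgue function is $\mathcal{L}_n(\lambda)=\sum_{i\in I}|l_i(\lambda)|$. For $r_s\in\mathbb{Z}_+$ with $r_1+r_2+r_3=n-1$ and reals $\alpha_s$ with $\alpha_1+\alpha_2+\alpha_3=1$, write $\mathfrak{L}_n(r_1,r_2,r_3,\alpha_1,\alpha_2,\alpha_3)=\mathcal{L}_n(\lambda)$ where $\lambda_s=(r_s+\alpha_s)/n$, $s=1,2,3$. *)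

From Stdlib Require Import Reals Lra Lia Arith Factorial.
Open Scope R_scope.

Fixpoint falling (x : R) (k : nat) : R :=
  match k with
  | O => 1
  | S k' => falling x k' * (x - INR k')
  end.

Definition fac_factor (n : nat) (lam : R) (k : nat) : R :=
  falling (INR n * lam) k / INR (fact k).

(* Lagrange fundamental polynomial l_i(lambda) for i = (i1,i2,i3), i1+i2+i3 = n *)
Definition lagr (n : nat) (i1 i2 i3 : nat) (l1 l2 l3 : R) : R :=
  fac_factor n l1 i1 * fac_factor n l2 i2 * fac_factor n l3 i3.

Fixpoint sum_upto (m : nat) (f : nat -> R) : R :=
  match m with
  | O => f O
  | S m' => sum_upto m' f + f m
  end.

Definition lebesgue (n : nat) (l1 l2 l3 : R) : R :=
  sum_upto n (fun i1 =>
    sum_upto (n - i1) (fun i2 =>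
      Rabs (lagr n i1 i2 (n - i1 - i2) l1 l2 l3))).

Definition frakL (n r1 r2 r3 : nat) (a1 a2 a3 : R) : R :=
  lebesgue n ((INR r1 + a1) / INR n) ((INR r2 + a2) / INR n) ((INR r3 + a3) / INR n).

From Stdlib Require Import Reals.
From Stdlib Require Import Lra Lia Arith Factorial.
Open Scope R_scope.

(* With x_s = r_s + a_s = n lambda_s, the Lebesgue function is the triple convolution
   sum_{i+j+k=n} |C(x1,i)| |C(x2,j)| |C(x3,k)| of generalised binomial coefficients.
   By Vandermonde, sum_j |C(a,j)| |C(b,K-j)| is C(a+b,K) plus twice the negative parts of
   the products.  Moving the integer part r of b = r + beta (0 <= beta <= 1) onto a, with
   rho = floor a, does not increase the negative parts of the terms with j <= rho, since
   C(a,j) <= C(a+r,j+r) and C(r+beta,r+m) = kappa C(beta,m) with 0 <= kappa <= 1.  The terms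
   with j > rho satisfy |C(a,j)| <= 2/((j-rho)(j-rho+1)), which sums to at most 2, against a
   convolution of the two other factors bounded by 3 2^(r+r') because |C(x,k)| <= 2^floor x.
   Moving r2 and then r3 onto the first coordinate thus costs at most
   12 2^(r2+r3) + 12 2^r3 <= 18 2^(r2+r3), and r2, r3 <= rho forces 3(r2+r3)+2 <= 2n. *)

Lemma sum_upto_sum_f_R0 (m : nat) (f : nat -> R) : sum_upto m f = sum_f_R0 f m.
Proof. induction m as [|m IH]; simpl; [reflexivity | now rewrite IH]. Qed.

Lemma sum_f_R0_rev (f : nat -> R) (m : nat) :
  sum_f_R0 f m = sum_f_R0 (fun j => f (m - j)%nat) m.
Proof.
  revert f; induction m as [|m IH]; intros f; [reflexivity|].
  rewrite (decomp_sum (fun j => f (S m - j)%nat)) by lia; simpl pred.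
  rewrite tech5, (IH f), Nat.sub_0_r, Rplus_comm.
  f_equal; apply sum_eq; intros j Hj; f_equal; lia.
Qed.

Lemma sum_f_R0_nonneg (f : nat -> R) (m : nat) :
  (forall j, (j <= m)%nat -> 0 <= f j) -> 0 <= sum_f_R0 f m.
Proof.
  intros Hf; rewrite <- (Rmult_0_l (INR (S m))), <- sum_cte.
  now apply sum_Rle.
Qed.

Lemma sum_f_R0_term_le (f : nat -> R) (m i : nat) :
  (i <= m)%nat -> (forall j, (j <= m)%nat -> 0 <= f j) -> f i <= sum_f_R0 f m.
Proof.
  revert i; induction m as [|m IH]; intros i Hi Hf; simpl.
  - replace i with O by lia; lra.
  - assert (0 <= f (S m)) by (apply Hf; lia).
    destruct (Nat.eq_dec i (S m)) as [->|Hne].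
    + assert (0 <= sum_f_R0 f m) by (apply sum_f_R0_nonneg; intros; apply Hf; lia). lra.
    + assert (f i <= sum_f_R0 f m) by (apply IH; [lia | intros; apply Hf; lia]). lra.
Qed.

Lemma sum_f_R0_shift_le (g : nat -> R) (m r : nat) :
  (forall j, 0 <= g j) ->
  sum_f_R0 (fun j => if (j + r <=? m)%nat then g (j + r)%nat else 0) m <= sum_f_R0 g m.
Proof.
  intros Hg; induction r as [|r IH].
  - right; apply sum_eq; intros j Hj.
    rewrite Nat.add_0_r; now replace (j <=? m)%nat with true by (symmetry; apply Nat.leb_le; lia).
  - eapply Rle_trans; [|exact IH].
    set (F := fun j => if (j + r <=? m)%nat then g (j + r)%nat else 0).
    assert (HF : forall j, 0 <= F j) by (intros j; unfold F; destruct (_ <=? _)%nat; [apply Hg | lra]).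
    destruct m as [|m].
    + simpl; replace (S r <=? 0)%nat with false by reflexivity. apply HF.
    + rewrite (decomp_sum F) by lia; simpl pred; rewrite tech5.
      replace (S m + S r <=? S m)%nat with false by (symmetry; apply Nat.leb_gt; lia).
      assert (E : sum_f_R0 (fun j => if (j + S r <=? S m)%nat then g (j + S r)%nat else 0) m
                  = sum_f_R0 (fun j => F (S j)) m).
      { apply sum_eq; intros j _; unfold F; now replace (j + S r)%nat with (S j + r)%nat by lia. }
      rewrite E; pose proof (HF O); lra.
Qed.

Definition tri_sum (n : nat) (F : nat -> nat -> R) : R :=
  sum_f_R0 (fun i => sum_f_R0 (fun j => F i j) (n - i)) n.

Definition diag_sum (s : nat) (F : nat -> nat -> R) : R := sum_f_R0 (fun i => F i (s - i)%nat) s.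

Lemma tri_sum_S (n : nat) (F : nat -> nat -> R) :
  tri_sum (S n) F = tri_sum n F + diag_sum (S n) F.
Proof.
  unfold tri_sum, diag_sum; rewrite !tech5, !Nat.sub_diag.
  rewrite (sum_eq _ (fun i => sum_f_R0 (fun j => F i j) (n - i) + F i (S n - i)%nat)).
  - rewrite plus_sum; simpl; ring.
  - intros i Hi; now replace (S n - i)%nat with (S (n - i)) by lia.
Qed.

Lemma tri_sum_by_diag (n : nat) (F : nat -> nat -> R) :
  tri_sum n F = sum_f_R0 (fun s => diag_sum s F) n.
Proof.
  induction n as [|n IH]; [reflexivity|].
  now rewrite tri_sum_S, IH.
Qed.

Lemma tri_sum_swap (n : nat) (F : nat -> nat -> R) :
  tri_sum n F = tri_sum n (fun i j => F j i).
Proof.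
  rewrite !tri_sum_by_diag; apply sum_eq; intros s _.
  unfold diag_sum; rewrite sum_f_R0_rev; apply sum_eq; intros i Hi; f_equal; lia.
Qed.

Definition conv (f g : nat -> R) (K : nat) : R := sum_f_R0 (fun j => f j * g (K - j)%nat) K.

Definition conv3 (n : nat) (f g h : nat -> R) : R := conv f (conv g h) n.

Lemma conv_comm (f g : nat -> R) (K : nat) : conv f g K = conv g f K.
Proof.
  unfold conv; rewrite sum_f_R0_rev; apply sum_eq; intros j Hj.
  replace (K - (K - j))%nat with j by lia; ring.
Qed.

Lemma conv3_swap23 (n : nat) (f g h : nat -> R) : conv3 n f g h = conv3 n f h g.
Proof. unfold conv3, conv at 1 3; apply sum_eq; intros; now rewrite conv_comm. Qed.

Lemma conv3_tri_sum (n : nat) (f g h : nat -> R) :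
  conv3 n f g h = tri_sum n (fun i j => f i * g j * h (n - i - j)%nat).
Proof.
  unfold conv3, conv, tri_sum; apply sum_eq; intros i _.
  rewrite scal_sum; apply sum_eq; intros; ring.
Qed.

Lemma conv3_swap12 (n : nat) (f g h : nat -> R) : conv3 n f g h = conv3 n g f h.
Proof.
  rewrite !conv3_tri_sum, tri_sum_swap; unfold tri_sum.
  apply sum_eq; intros i _; apply sum_eq; intros j _.
  replace (n - j - i)%nat with (n - i - j)%nat by lia; ring.
Qed.

Lemma conv3_rot (n : nat) (f g h : nat -> R) : conv3 n f g h = conv3 n h f g.
Proof. now rewrite conv3_swap23, conv3_swap12. Qed.

Lemma falling_add (x : R) (p q : nat) :
  falling x (p + q) = falling x p * falling (x - INR p) q.
Proof.
  induction q as [|q IH]; simpl.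
  - rewrite Nat.add_0_r; ring.
  - rewrite Nat.add_succ_r; simpl; rewrite IH, plus_INR; ring.
Qed.

Lemma falling_succ_shift (x : R) (k : nat) :
  falling (x + 1) (S k) = (x + 1) * falling x k.
Proof.
  induction k as [|k IH]; [simpl; ring|].
  change (falling (x + 1) (S k) * (x + 1 - INR (S k)) = (x + 1) * (falling x k * (x - INR k))).
  rewrite IH, S_INR; ring.
Qed.

Lemma falling_nat_fact (d k : nat) :
  falling (INR (d + k)) k * INR (fact d) = INR (fact (d + k)).
Proof.
  induction k as [|k IH].
  - simpl; rewrite Nat.add_0_r; ring.
  - rewrite Nat.add_succ_r, S_INR, falling_succ_shift.
    change (fact (S (d + k))) with (S (d + k) * fact (d + k))%nat.
    rewrite mult_INR, S_INR, <- IH; ring.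
Qed.

Lemma falling_nonneg (x : R) (k : nat) : INR k <= x + 1 -> 0 <= falling x k.
Proof.
  induction k as [|k IH]; intros Hk; simpl; [lra|].
  rewrite S_INR in Hk; pose proof (pos_INR k).
  apply Rmult_le_pos; [apply IH|]; lra.
Qed.

Lemma falling_le_compat (x y : R) (k : nat) :
  INR k <= x + 1 -> x <= y -> falling x k <= falling y k.
Proof.
  induction k as [|k IH]; intros Hk Hxy; simpl; [lra|].
  rewrite S_INR in Hk; pose proof (pos_INR k).
  apply Rmult_le_compat; [apply falling_nonneg; lra | lra | apply IH; lra | lra].
Qed.

Lemma falling_nat_zero (a k : nat) : (a < k)%nat -> falling (INR a) k = 0.
Proof.
  intros Hak; replace k with (S a + (k - S a))%nat by lia.
  rewrite falling_add; simpl; rewrite Rminus_diag; ring.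
Qed.

Lemma falling_nat_nonneg (a k : nat) : 0 <= falling (INR a) k.
Proof.
  destruct (le_lt_dec k a) as [Hka|Hak].
  - apply falling_nonneg; apply le_INR in Hka; lra.
  - rewrite falling_nat_zero by exact Hak; lra.
Qed.

Lemma falling_abs_le (rho : nat) (x : R) (k : nat) :
  INR rho <= x <= INR rho + 1 -> (k <= S rho)%nat ->
  Rabs (falling x k) <= falling (INR (S rho)) k.
Proof.
  intros Hx; induction k as [|k IH]; intros Hk; cbn [falling].
  - rewrite Rabs_R1; lra.
  - rewrite Rabs_mult.
    apply Rmult_le_compat; [apply Rabs_pos | apply Rabs_pos | apply IH; lia |].
    apply le_INR in Hk; rewrite !S_INR in *; rewrite Rabs_right; lra.
Qed.

Definition binom (x : R) (k : nat) : R := falling x k / INR (fact k).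

Definition abinom (x : R) (k : nat) : R := Rabs (binom x k).

Lemma binom_0 (x : R) : binom x 0 = 1.
Proof. unfold binom; simpl; field. Qed.

Lemma binom_S (x : R) (k : nat) : binom x (S k) = binom x k * (x - INR k) / INR (S k).
Proof.
  unfold binom; change (fact (S k)) with (S k * fact k)%nat; rewrite mult_INR.
  pose proof (INR_fact_lt_0 k); pose proof (lt_0_INR (S k) (Nat.lt_0_succ k)).
  simpl falling; field; lra.
Qed.

Lemma binom_pascal (x : R) (k : nat) : binom (x + 1) (S k) = binom x (S k) + binom x k.
Proof.
  unfold binom; rewrite falling_succ_shift.
  change (fact (S k)) with (S k * fact k)%nat; rewrite mult_INR, S_INR.
  pose proof (INR_fact_lt_0 k); pose proof (pos_INR k).
  simpl falling; field; lra.
Qed.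

Lemma binom_nonneg (x : R) (k : nat) : INR k <= x + 1 -> 0 <= binom x k.
Proof.
  intros Hk; unfold binom, Rdiv; apply Rmult_le_pos; [now apply falling_nonneg|].
  left; apply Rinv_0_lt_compat, INR_fact_lt_0.
Qed.

Lemma binom_nat_nonneg (a k : nat) : 0 <= binom (INR a) k.
Proof.
  unfold binom, Rdiv; apply Rmult_le_pos; [apply falling_nat_nonneg|].
  left; apply Rinv_0_lt_compat, INR_fact_lt_0.
Qed.

Lemma binom_nat_zero (a k : nat) : (a < k)%nat -> binom (INR a) k = 0.
Proof. intros Hak; unfold binom; rewrite falling_nat_zero by exact Hak; lra. Qed.

Lemma binom_nat_diag (a : nat) : binom (INR a) a = 1.
Proof.
  unfold binom; pose proof (falling_nat_fact 0 a) as H; simpl in H.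
  rewrite Rmult_1_r in H; rewrite H; pose proof (INR_fact_lt_0 a); field; lra.
Qed.

Lemma binom_succ_mul (x : R) (k : nat) : INR (S k) * binom x (S k) = (x - INR k) * binom x k.
Proof. rewrite binom_S; pose proof (lt_0_INR (S k) (Nat.lt_0_succ k)); field; lra. Qed.

Lemma vandermonde (a b : R) (K : nat) : conv (binom a) (binom b) K = binom (a + b) K.
Proof.
  induction K as [|K IH].
  - unfold conv; simpl; rewrite !binom_0; ring.
  - apply Rmult_eq_reg_l with (INR (S K)); [|apply not_0_INR; lia].
    rewrite binom_succ_mul, <- IH; unfold conv.
    (* weight each term by S K = j + (S K - j) and lower the matching factor with [binom_succ_mul] *)
    transitivity (sum_f_R0 (fun j => INR j * binom a j * binom b (S K - j)%nat) (S K)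
                  + sum_f_R0 (fun j => binom a j * (INR (S K - j) * binom b (S K - j)%nat)) (S K)).
    { rewrite <- plus_sum, scal_sum; apply sum_eq; intros j Hj; rewrite minus_INR by lia; ring. }
    rewrite decomp_sum by lia; simpl pred; rewrite tech5, Nat.sub_diag.
    rewrite (sum_eq (fun j => INR (S j) * binom a (S j) * binom b (S K - S j)%nat)
                    (fun j => binom a j * binom b (K - j)%nat * (a - INR j)))
      by (intros j _; rewrite binom_succ_mul; simpl (S K - S j)%nat; ring).
    rewrite (sum_eq (fun j => binom a j * (INR (S K - j) * binom b (S K - j)%nat))
                    (fun j => binom a j * binom b (K - j)%nat * (b - INR (K - j))))
      by (intros j Hj; replace (S K - j)%nat with (S (K - j)) by lia; rewrite binom_succ_mul; ring).
    match goal with |- _ + ?S1 + (?S2 + _) = _ => transitivity (S1 + S2); [simpl INR; ring|] end.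
    rewrite <- plus_sum, scal_sum; apply sum_eq; intros j Hj; rewrite minus_INR by lia; ring.
Qed.

Definition negpart (y : R) : R := (Rabs y - y) / 2.

Lemma negpart_nonneg (y : R) : 0 <= negpart y.
Proof. unfold negpart; pose proof (Rle_abs y); lra. Qed.

Lemma negpart_le_abs (y : R) : negpart y <= Rabs y.
Proof. unfold negpart; pose proof (Rabs_pos y); pose proof (Rle_abs (- y)); rewrite Rabs_Ropp in *; lra. Qed.

Lemma negpart_eq0 (y : R) : 0 <= y -> negpart y = 0.
Proof. intros Hy; unfold negpart; rewrite Rabs_right; lra. Qed.

Lemma negpart_scale (c y : R) : 0 <= c -> negpart (c * y) = c * negpart y.
Proof. intros Hc; unfold negpart; rewrite Rabs_mult, (Rabs_right c) by lra; field. Qed.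

Lemma Rabs_negpart (y : R) : Rabs y = y + 2 * negpart y.
Proof. unfold negpart; lra. Qed.

Lemma fact_mul_le (r m : nat) : (fact (S r) * fact (S m) <= fact (r + S m))%nat.
Proof.
  induction m as [|m IH].
  - rewrite Nat.add_1_r; simpl (fact 1); lia.
  - rewrite Nat.add_succ_r.
    change (fact (S (S m))) with (S (S m) * fact (S m))%nat.
    change (fact (S (r + S m))) with (S (r + S m) * fact (r + S m))%nat.
    apply Nat.le_trans with (S (S m) * fact (r + S m))%nat; [nia | apply Nat.mul_le_mono_r; lia].
Qed.

Lemma binom_shift_le (a : R) (j r : nat) : INR j <= a -> binom a j <= binom (a + INR r) (j + r).
Proof.
  intros Hj; unfold binom.
  rewrite Nat.add_comm, falling_add; replace (a + INR r - INR r) with a by ring.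
  pose proof (falling_nat_fact j r) as Hf; rewrite Nat.add_comm in Hf; rewrite <- Hf.
  pose proof (INR_fact_lt_0 j) as Hj0; pose proof (INR_fact_lt_0 (r + j)) as Hrj.
  assert (H0 : 0 <= falling a j) by (apply falling_nonneg; lra).
  assert (H1 : 0 < falling (INR (r + j)) r) by nra.
  assert (H2 : falling (INR (r + j)) r <= falling (a + INR r) r)
    by (rewrite plus_INR; pose proof (pos_INR j); apply falling_le_compat; lra).
  apply Rmult_le_reg_r with (falling (INR (r + j)) r * INR (fact j)); [nra|].
  field_simplify; [|lra|lra]; nra.
Qed.

Lemma binom_split_top (r : nat) (beta : R) (m : nat) : 0 <= beta <= 1 ->
  exists kappa, 0 <= kappa <= 1 /\ binom (INR r + beta) (r + S m) = kappa * binom beta (S m).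
Proof.
  intros Hb.
  exists (falling (INR r + beta) r * INR (fact (S m)) / INR (fact (r + S m))).
  pose proof (INR_fact_lt_0 (S m)); pose proof (INR_fact_lt_0 (r + S m)).
  assert (F0 : 0 <= falling (INR r + beta) r) by (apply falling_nonneg; lra).
  assert (F1 : falling (INR r + beta) r <= INR (fact (S r))).
  { pose proof (falling_nat_fact 1 r) as Hf; simpl (fact 1) in Hf.
    rewrite Rmult_1_r, Nat.add_1_l in Hf; rewrite <- Hf.
    apply falling_le_compat; rewrite ?S_INR; lra. }
  assert (F2 : INR (fact (S r)) * INR (fact (S m)) <= INR (fact (r + S m)))
    by (rewrite <- mult_INR; apply le_INR, fact_mul_le).
  split; [split|].
  - apply Rmult_le_pos; [nra | left; now apply Rinv_0_lt_compat].
  - apply Rmult_le_reg_r with (INR (fact (r + S m))); [lra|].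
    unfold Rdiv; rewrite Rmult_assoc, Rinv_l by lra; nra.
  - unfold binom; rewrite falling_add; replace (INR r + beta - INR r) with beta by ring.
    field; lra.
Qed.

Lemma conv_abinom (x y : R) (K : nat) :
  conv (abinom x) (abinom y) K
  = binom (x + y) K + 2 * sum_f_R0 (fun j => negpart (binom x j * binom y (K - j)%nat)) K.
Proof.
  rewrite <- vandermonde; unfold conv.
  rewrite scal_sum, <- plus_sum; apply sum_eq; intros j _.
  unfold abinom; rewrite <- Rabs_mult, Rabs_negpart; ring.
Qed.

Definition abinom_tail (x : R) (rho j : nat) : R := if (rho <? j)%nat then abinom x j else 0.

Lemma negpart_binom_mul_le (a beta : R) (rho r K j : nat) :
  INR rho <= a -> 0 <= beta <= 1 -> (j <= K)%nat ->
  negpart (binom a j * binom (INR r + beta) (K - j))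
  <= abinom_tail a rho j * abinom (INR r + beta) (K - j)
     + (if (j + r <=? K)%nat
        then negpart (binom (a + INR r) (j + r) * binom beta (K - (j + r))) else 0).
Proof.
  intros Ha Hb Hj.
  assert (E0 : 0 <= if (j + r <=? K)%nat
                    then negpart (binom (a + INR r) (j + r) * binom beta (K - (j + r))) else 0)
    by (destruct (_ <=? _)%nat; [apply negpart_nonneg | lra]).
  unfold abinom_tail; destruct (rho <? j)%nat eqn:Hrj.
  - unfold abinom; rewrite <- Rabs_mult; pose proof (negpart_le_abs (binom a j * binom (INR r + beta) (K - j))); lra.
  - apply Nat.ltb_ge, le_INR in Hrj.
    assert (Pa : 0 <= binom a j) by (apply binom_nonneg; lra).
    destruct (le_lt_dec (K - j) r) as [Hr | Hr].
    + rewrite negpart_eq0; [lra|].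
      apply Rmult_le_pos; [exact Pa|]; apply binom_nonneg; apply le_INR in Hr; lra.
    + replace (j + r <=? K)%nat with true by (symmetry; apply Nat.leb_le; lia).
      (* C(r+beta, r+1+m) = kappa C(beta, 1+m) with kappa in [0,1], and C(a, j) <= C(a+r, j+r) *)
      replace (K - j)%nat with (r + S (K - j - r - 1))%nat by lia.
      replace (K - (j + r))%nat with (S (K - j - r - 1)) by lia.
      destruct (binom_split_top r beta (K - j - r - 1) Hb) as [kappa [Hk ->]].
      rewrite Rmult_0_l, Rplus_0_l, <- Rmult_assoc.
      assert (Pa' : binom a j <= binom (a + INR r) (j + r)) by (apply binom_shift_le; lra).
      rewrite !negpart_scale by nra.
      apply Rmult_le_compat_r; [apply negpart_nonneg | nra].
Qed.

Lemma conv_abinom_transfer (a beta : R) (rho r K : nat) : INR rho <= a -> 0 <= beta <= 1 ->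
  conv (abinom a) (abinom (INR r + beta)) K
  <= conv (abinom (a + INR r)) (abinom beta) K + 2 * conv (abinom_tail a rho) (abinom (INR r + beta)) K.
Proof.
  intros Ha Hb.
  rewrite (conv_abinom a), (conv_abinom (a + INR r) beta).
  replace (a + INR r + beta) with (a + (INR r + beta)) by ring.
  enough (sum_f_R0 (fun j => negpart (binom a j * binom (INR r + beta) (K - j))) K
          <= sum_f_R0 (fun j => negpart (binom (a + INR r) j * binom beta (K - j))) K
             + conv (abinom_tail a rho) (abinom (INR r + beta)) K) by lra.
  eapply Rle_trans; [apply sum_Rle; intros j Hj; apply (negpart_binom_mul_le a beta rho r K j Ha Hb Hj)|].
  rewrite plus_sum, Rplus_comm; apply Rplus_le_compat_r.
  apply (sum_f_R0_shift_le (fun j => negpart (binom (a + INR r) j * binom beta (K - j)))).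
  intros; apply negpart_nonneg.
Qed.

Lemma conv3_transfer_weighted (n : nat) (w : nat -> R) (a beta : R) (rho r : nat) :
  (forall i, 0 <= w i) -> INR rho <= a -> 0 <= beta <= 1 ->
  conv3 n w (abinom a) (abinom (INR r + beta))
  <= conv3 n w (abinom (a + INR r)) (abinom beta)
     + 2 * conv3 n w (abinom_tail a rho) (abinom (INR r + beta)).
Proof.
  intros Hw Ha Hb; unfold conv3, conv at 1 3 5.
  rewrite scal_sum, <- plus_sum; apply sum_Rle; intros i _.
  pose proof (conv_abinom_transfer a beta rho r (n - i) Ha Hb); pose proof (Hw i); nra.
Qed.

Definition abinom_majorant (m k : nat) : R := if (k <=? m)%nat then binom (INR m) k else 1.

Section Near_integer.

Variables (rho : nat) (x : R).
Hypothesis Hx : INR rho <= x <= INR rho + 1.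

Lemma abinom_le_binom (k : nat) : (k <= S rho)%nat -> abinom x k <= binom (INR (S rho)) k.
Proof.
  intros Hk; unfold abinom, binom, Rdiv.
  pose proof (INR_fact_lt_0 k); rewrite Rabs_mult, (Rabs_right (/ _)).
  - apply Rmult_le_compat_r; [left; now apply Rinv_0_lt_compat | now apply falling_abs_le].
  - left; now apply Rinv_0_lt_compat.
Qed.

Lemma abinom_succ_le (k : nat) : (rho < k)%nat ->
  abinom x (S k) <= abinom x k * INR (k - rho) / INR (S k).
Proof.
  intros Hk; unfold abinom; rewrite binom_S; unfold Rdiv; rewrite !Rabs_mult.
  assert (HSk : 0 < INR (S k)) by (apply lt_0_INR; lia).
  rewrite (Rabs_right (/ INR (S k))) by (left; now apply Rinv_0_lt_compat).
  apply Rmult_le_compat_r; [left; now apply Rinv_0_lt_compat|].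
  apply Rmult_le_compat_l; [apply Rabs_pos|].
  rewrite minus_INR by lia; apply le_INR in Hk; rewrite S_INR in Hk; rewrite Rabs_left1; lra.
Qed.

Lemma abinom_beyond_le_1 (p : nat) : abinom x (S rho + p) <= 1.
Proof.
  induction p as [|p IH].
  - rewrite Nat.add_0_r, <- (binom_nat_diag (S rho)); now apply abinom_le_binom.
  - rewrite Nat.add_succ_r.
    eapply Rle_trans; [apply abinom_succ_le; lia|].
    replace (S rho + p - rho)%nat with (S p) by lia.
    assert (INR (S p) <= INR (S (S rho + p))) by (apply le_INR; lia).
    assert (0 < INR (S (S rho + p))) by (apply lt_0_INR; lia).
    pose proof (pos_INR (S p)); pose proof (Rabs_pos (binom x (S rho + p))).
    apply Rmult_le_reg_r with (INR (S (S rho + p))); [lra|].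
    unfold Rdiv, abinom in *; rewrite Rmult_assoc, Rinv_l by lra; nra.
Qed.

Lemma abinom_beyond_decay (p : nat) : (1 <= rho)%nat ->
  abinom x (S rho + p) <= 2 / (INR (S p) * INR (S (S p))).
Proof.
  intros Hrho; induction p as [|p IH].
  - rewrite Nat.add_0_r; replace (2 / (INR 1 * INR 2)) with 1 by (simpl; field).
    rewrite <- (binom_nat_diag (S rho)); now apply abinom_le_binom.
  - rewrite Nat.add_succ_r.
    eapply Rle_trans; [apply abinom_succ_le; lia|].
    replace (S rho + p - rho)%nat with (S p) by lia.
    (* the ratio (p+1)/(rho+p+2) is at most (p+1)/(p+3) since rho >= 1 *)
    assert (INR (S (S (S p))) <= INR (S (S rho + p))) by (apply le_INR; lia).
    pose proof (pos_INR p); pose proof (Rabs_pos (binom x (S rho + p))).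
    unfold abinom in *; rewrite !S_INR in *.
    apply Rle_trans with (2 / ((INR p + 1) * (INR p + 1 + 1)) * (INR p + 1) / (INR p + 1 + 1 + 1)).
    + unfold Rdiv; apply Rmult_le_compat; try nra.
      * left; apply Rinv_0_lt_compat; lra.
      * apply Rinv_le_contravar; lra.
    + right; field; lra.
Qed.

Lemma abinom_le_majorant (k : nat) : abinom x k <= abinom_majorant (S rho) k.
Proof.
  unfold abinom_majorant; destruct (k <=? S rho)%nat eqn:Hk.
  - apply Nat.leb_le in Hk; now apply abinom_le_binom.
  - apply Nat.leb_gt in Hk; replace k with (S rho + (k - S rho))%nat by lia.
    apply abinom_beyond_le_1.
Qed.

Lemma abinom_tail_partial_sum_le (N : nat) : (1 <= rho)%nat ->
  sum_f_R0 (abinom_tail x rho) N <= 2 - 2 / INR (S (N - rho)).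
Proof.
  intros Hrho; induction N as [|N IH]; simpl sum_f_R0.
  - unfold abinom_tail; replace (rho <? 0)%nat with false by reflexivity.
    replace (0 - rho)%nat with O by lia; simpl; lra.
  - unfold abinom_tail at 2; destruct (rho <? S N)%nat eqn:E.
    + apply Nat.ltb_lt in E.
      pose proof (abinom_beyond_decay (N - rho) Hrho) as Hdecay.
      replace (S rho + (N - rho))%nat with (S N) in Hdecay by lia.
      replace (S N - rho)%nat with (S (N - rho)) by lia.
      pose proof (pos_INR (N - rho)); rewrite !S_INR in *.
      apply Rle_trans with (2 - 2 / (INR (N - rho) + 1)
                            + 2 / ((INR (N - rho) + 1) * (INR (N - rho) + 1 + 1))); [lra|].
      right; field; lra.
    + apply Nat.ltb_ge in E; replace (S N - rho)%nat with (N - rho)%nat by lia; lra.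
Qed.

End Near_integer.

Lemma binom_nat_partial_sum_le (a M : nat) : sum_f_R0 (binom (INR a)) M <= 2 ^ a.
Proof.
  revert M; induction a as [|a IH]; intros M.
  - destruct M as [|M]; [simpl; rewrite binom_0; lra|].
    rewrite decomp_sum, binom_0 by lia; simpl pred.
    rewrite (sum_eq _ (fun _ => 0)) by (intros; apply binom_nat_zero; lia).
    rewrite sum_cte; simpl; lra.
  - destruct M as [|M]; [simpl; rewrite binom_0; pose proof (pow_R1_Rle 2 a); lra|].
    rewrite decomp_sum, binom_0, S_INR by lia; simpl pred.
    rewrite (sum_eq _ (fun j => binom (INR a) (S j) + binom (INR a) j)) by (intros; apply binom_pascal).
    rewrite plus_sum; pose proof (IH (S M)) as H1; pose proof (IH M) as H2.
    rewrite decomp_sum, binom_0 in H1 by lia; simpl pred in H1.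
    simpl; lra.
Qed.

Lemma binom_nat_le_pow (b k : nat) : binom (INR (S b)) k <= 2 ^ b.
Proof.
  destruct k as [|k].
  - rewrite binom_0; apply pow_R1_Rle; lra.
  - rewrite S_INR, binom_pascal.
    pose proof (binom_nat_partial_sum_le b (S k)) as H; rewrite tech5 in H.
    pose proof (sum_f_R0_term_le (binom (INR b)) k k (le_n k) (fun j _ => binom_nat_nonneg b j)).
    lra.
Qed.

Lemma abinom_majorant_nonneg (m k : nat) : 0 <= abinom_majorant m k.
Proof. unfold abinom_majorant; destruct (k <=? m)%nat; [apply binom_nat_nonneg | lra]. Qed.

Lemma abinom_majorant_le_pow (b k : nat) : abinom_majorant (S b) k <= 2 ^ b.
Proof.
  unfold abinom_majorant; destruct (k <=? S b)%nat; [apply binom_nat_le_pow | apply pow_R1_Rle; lra].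
Qed.

Lemma count_above_le (a M : nat) : sum_f_R0 (fun i => if (a <? i)%nat then 1 else 0) M <= INR (M - a).
Proof.
  induction M as [|M IH]; simpl sum_f_R0.
  - destruct (a <? 0)%nat eqn:E; [apply Nat.ltb_lt in E; lia | simpl; lra].
  - destruct (a <? S M)%nat eqn:E.
    + apply Nat.ltb_lt in E; replace (S M - a)%nat with (S (M - a)) by lia; rewrite S_INR; lra.
    + apply Nat.ltb_ge in E; replace (S M - a)%nat with O in * by lia.
      replace (M - a)%nat with O in IH by lia; lra.
Qed.

Lemma abinom_majorant_partial_sum_le (a M : nat) :
  sum_f_R0 (abinom_majorant a) M <= 2 ^ a + INR (M - a).
Proof.
  apply Rle_trans with (sum_f_R0 (fun i => binom (INR a) i + (if (a <? i)%nat then 1 else 0)) M).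
  - apply sum_Rle; intros i _; unfold abinom_majorant.
    destruct (i <=? a)%nat eqn:E.
    + apply Nat.leb_le in E; replace (a <? i)%nat with false by (symmetry; apply Nat.ltb_ge; lia); lra.
    + apply Nat.leb_gt in E; replace (a <? i)%nat with true by (symmetry; apply Nat.ltb_lt; lia).
      rewrite binom_nat_zero by exact E; lra.
  - rewrite plus_sum; pose proof (binom_nat_partial_sum_le a M); pose proof (count_above_le a M); lra.
Qed.

Lemma INR_le_pow2 (n : nat) : INR n <= 2 ^ n.
Proof.
  induction n as [|n IH]; [simpl; lra|].
  rewrite S_INR; simpl; pose proof (pow_R1_Rle 2 n); lra.
Qed.

Lemma conv_majorant_le (a b M : nat) : (b <= a)%nat -> (M <= S a + b)%nat ->
  conv (abinom_majorant (S a)) (abinom_majorant (S b)) M <= 3 * 2 ^ (a + b).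
Proof.
  intros Hba HM; unfold conv.
  apply Rle_trans with (sum_f_R0 (fun i => abinom_majorant (S a) i * 2 ^ b) M).
  - apply sum_Rle; intros; apply Rmult_le_compat_l; [apply abinom_majorant_nonneg | apply abinom_majorant_le_pow].
  - rewrite <- scal_sum, pow_add.
    pose proof (abinom_majorant_partial_sum_le (S a) M); pose proof (INR_le_pow2 (M - S a)).
    assert (2 ^ (M - S a) <= 2 ^ a) by (apply Rle_pow; [lra | lia]).
    pose proof (pow_le 2 b); simpl in *; nra.
Qed.

Lemma conv_abinom_le (rc rb : nat) (xc xb : R) (M : nat) :
  INR rc <= xc <= INR rc + 1 -> INR rb <= xb <= INR rb + 1 -> (M <= rc + rb + 1)%nat ->
  conv (abinom xc) (abinom xb) M <= 3 * 2 ^ (rc + rb).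
Proof.
  intros Hc Hb HM.
  assert (Hmaj : forall rho x rho' x', INR rho <= x <= INR rho + 1 -> INR rho' <= x' <= INR rho' + 1 ->
            conv (abinom x) (abinom x') M <= conv (abinom_majorant (S rho)) (abinom_majorant (S rho')) M).
  { intros; apply sum_Rle; intros.
    apply Rmult_le_compat; try apply Rabs_pos; now apply abinom_le_majorant. }
  destruct (le_lt_dec rb rc).
  - eapply Rle_trans; [now apply Hmaj|]; apply conv_majorant_le; lia.
  - rewrite conv_comm, Nat.add_comm.
    eapply Rle_trans; [now apply Hmaj|]; apply conv_majorant_le; lia.
Qed.

Lemma conv3_tail_le (n rho rc rb : nat) (x xc xb : R) : (1 <= rho)%nat ->
  INR rho <= x <= INR rho + 1 -> INR rc <= xc <= INR rc + 1 -> INR rb <= xb <= INR rb + 1 ->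
  (n <= rho + rc + rb + 2)%nat ->
  conv3 n (abinom_tail x rho) (abinom xc) (abinom xb) <= 6 * 2 ^ (rc + rb).
Proof.
  intros Hrho Hx Hc Hb Hn; unfold conv3, conv at 1.
  apply Rle_trans with (sum_f_R0 (fun j => abinom_tail x rho j * (3 * 2 ^ (rc + rb))) n).
  - apply sum_Rle; intros j Hj; unfold abinom_tail; destruct (rho <? j)%nat eqn:E; [|lra].
    apply Nat.ltb_lt in E; apply Rmult_le_compat_l; [apply Rabs_pos|].
    apply conv_abinom_le; auto; lia.
  - rewrite <- scal_sum.
    pose proof (abinom_tail_partial_sum_le rho x Hx n Hrho).
    assert (0 < INR (S (n - rho))) by (apply lt_0_INR; lia).
    assert (0 <= 2 / INR (S (n - rho))) by (apply Rlt_le, Rdiv_lt_0_compat; lra).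
    pose proof (pow_le 2 (rc + rb)); nra.
Qed.

Lemma conv3_transfer (n rho r ry : nat) (x beta y : R) : (1 <= rho)%nat ->
  INR rho <= x <= INR rho + 1 -> 0 <= beta <= 1 -> INR ry <= y <= INR ry + 1 ->
  (n <= rho + r + ry + 2)%nat ->
  conv3 n (abinom x) (abinom (INR r + beta)) (abinom y)
  <= conv3 n (abinom (x + INR r)) (abinom beta) (abinom y) + 12 * 2 ^ (r + ry).
Proof.
  intros Hrho Hx Hb Hy Hn.
  rewrite !(conv3_rot n _ _ (abinom y)).
  eapply Rle_trans; [apply (conv3_transfer_weighted n (abinom y) x beta rho r); auto; [intros; apply Rabs_pos | lra]|].
  assert (Htail : conv3 n (abinom_tail x rho) (abinom (INR r + beta)) (abinom y) <= 6 * 2 ^ (r + ry))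
    by (apply conv3_tail_le; auto; lra).
  rewrite conv3_rot in Htail; lra.
Qed.

Lemma lebesgue_conv3 (n : nat) (l1 l2 l3 : R) :
  lebesgue n l1 l2 l3
  = conv3 n (abinom (INR n * l1)) (abinom (INR n * l2)) (abinom (INR n * l3)).
Proof.
  unfold lebesgue; rewrite sum_upto_sum_f_R0; unfold conv3, conv; apply sum_eq; intros i _.
  rewrite sum_upto_sum_f_R0, scal_sum; apply sum_eq; intros j _.
  unfold lagr, fac_factor, abinom, binom; rewrite !Rabs_mult; ring.
Qed.

Lemma frakL_conv3 (n r1 r2 r3 : nat) (a1 a2 a3 : R) : (1 <= n)%nat ->
  frakL n r1 r2 r3 a1 a2 a3
  = conv3 n (abinom (INR r1 + a1)) (abinom (INR r2 + a2)) (abinom (INR r3 + a3)).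
Proof.
  intros Hn; unfold frakL; rewrite lebesgue_conv3.
  assert (Hn0 : INR n <> 0) by (apply not_0_INR; lia).
  assert (Hscale : forall y, INR n * (y / INR n) = y) by (intros; field; exact Hn0).
  now rewrite !Hscale.
Qed.

Lemma dominant_floor (n r1 r2 r3 : nat) (a1 a2 a3 : R) :
  (4 <= n)%nat -> (r1 + r2 + r3 = n - 1)%nat ->
  -1 < a1 < 1 -> 0 <= a2 < 1 -> 0 <= a3 < 1 -> a1 + a2 + a3 = 1 ->
  INR r1 + a1 >= INR r2 + a2 -> INR r1 + a1 >= INR r3 + a3 ->
  exists rho, INR rho <= INR r1 + a1 <= INR rho + 1 /\ (1 <= rho)%nat /\
              (n <= rho + r2 + r3 + 2)%nat /\ (3 * (r2 + r3) + 2 <= 2 * n)%nat.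
Proof.
  intros Hn Hr Ha1 Ha2 Ha3 Hsum H12 H13.
  assert (Hsplit : exists rho, INR rho <= INR r1 + a1 < INR rho + 1 /\
                               (rho + r2 + r3 + 1 = n \/ rho + r2 + r3 + 2 = n)%nat).
  { destruct (Rle_lt_dec 0 a1).
    - exists r1; split; [lra | lia].
    - destruct r1 as [|r1]; [simpl in H12; pose proof (pos_INR r2); lra|].
      exists r1; rewrite S_INR in *; split; [lra | lia]. }
  destruct Hsplit as [rho [Hx Hrho]].
  assert (INR r2 < INR (S rho) /\ INR r3 < INR (S rho)) as [H2 H3] by (rewrite S_INR; lra).
  apply INR_lt in H2, H3.
  assert (Hrho1 : (1 <= rho)%nat).
  { destruct rho as [|rho]; [|lia].
    assert (INR r1 + INR r2 + INR r3 = INR n - 1)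
      by (rewrite <- !plus_INR, Hr, minus_INR by lia; simpl; ring).
    apply le_INR in Hn; simpl in *; lra. }
  exists rho; repeat split; lra || lia.
Qed.

Lemma pow2_mul_18_le (n s : nat) : (4 <= n)%nat -> (3 * s + 2 <= 2 * n)%nat ->
  18 * 2 ^ s <= Rpower 2 (2 * INR n / 3) * (10 + 2 * ln (INR n)).
Proof.
  intros Hn Hs.
  assert (Hln : 1 <= ln (INR n)).
  { rewrite <- ln_exp at 1; left; apply ln_increasing; [apply exp_pos|].
    pose proof exp_le_3; apply le_INR in Hn; simpl in Hn; lra. }
  (* 2^(2/3) >= 3/2 because (3/2)^3 < 4 *)
  assert (Hcbrt : 3 / 2 <= Rpower 2 (2 / 3)).
  { set (y := Rpower 2 (2 / 3)); assert (0 < y) by apply exp_pos.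
    assert (y ^ 3 = 4).
    { unfold y; rewrite <- Rpower_pow, Rpower_mult by apply exp_pos.
      replace (2 / 3 * INR 3) with (INR 2) by (simpl; field).
      rewrite Rpower_pow by lra; simpl; ring. }
    destruct (Rlt_le_dec y (3 / 2)); [simpl in *; nra | lra]. }
  assert (Hpow : 2 ^ s * (3 / 2) <= Rpower 2 (2 * INR n / 3)).
  { rewrite <- Rpower_pow by lra.
    apply Rle_trans with (Rpower 2 (INR s) * Rpower 2 (2 / 3)).
    - apply Rmult_le_compat_l; [left; apply exp_pos | exact Hcbrt].
    - rewrite <- Rpower_plus; apply Rle_Rpower; [lra|].
      apply le_INR in Hs; rewrite !plus_INR, !mult_INR in Hs; simpl in Hs; lra. }
  pose proof (pow_le 2 s); nra.
Qed.

Theorem theorem1 (n r1 r2 r3 : nat) (a1 a2 a3 : R) :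
  (4 <= n)%nat ->
  (r1 + r2 + r3 = n - 1)%nat ->
  -1 < a1 < 1 -> 0 <= a2 < 1 -> 0 <= a3 < 1 ->
  a1 + a2 + a3 = 1 ->
  INR r1 + a1 >= INR r2 + a2 ->
  INR r1 + a1 >= INR r3 + a3 ->
  frakL n r1 r2 r3 a1 a2 a3 <=
    frakL n (n - 1) 0 0 a1 a2 a3
    + Rpower 2 (2 * INR n / 3) * (10 + 2 * ln (INR n)).
Proof.
  intros Hn Hr Ha1 Ha2 Ha3 Hsum H12 H13.
  destruct (dominant_floor n r1 r2 r3 a1 a2 a3) as [rho [Hx1 [Hrho [Hn2 Hs]]]]; auto.
  rewrite !frakL_conv3 by lia.
  set (x1 := INR r1 + a1) in *.
  replace (INR (n - 1) + a1) with (x1 + INR r2 + INR r3) by (rewrite <- Hr, !plus_INR; unfold x1; ring).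
  change (INR 0) with 0; rewrite !Rplus_0_l.
  pose proof (pow2_mul_18_le n (r2 + r3) Hn Hs) as Hbound.
  assert (Hmove3 : conv3 n (abinom (x1 + INR r2)) (abinom a2) (abinom (INR r3 + a3))
                   <= conv3 n (abinom (x1 + INR r2 + INR r3)) (abinom a2) (abinom a3) + 12 * 2 ^ r3).
  { rewrite (conv3_swap23 n (abinom (x1 + INR r2))), (conv3_swap23 n (abinom (x1 + INR r2 + INR r3))).
    rewrite <- (Nat.add_0_r r3) at 3.
    apply (conv3_transfer n (rho + r2)); rewrite ?plus_INR; simpl; lra || lia. }
  destruct (Nat.eq_dec r2 0) as [-> | Hr2].
  - change (INR 0) with 0 in *; rewrite Rplus_0_l; rewrite Rplus_0_r in Hmove3.
    rewrite Rplus_0_r; simpl Nat.add in Hbound; pose proof (pow_le 2 r3); lra.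
  - assert (Hmove2 : conv3 n (abinom x1) (abinom (INR r2 + a2)) (abinom (INR r3 + a3))
                     <= conv3 n (abinom (x1 + INR r2)) (abinom a2) (abinom (INR r3 + a3))
                        + 12 * 2 ^ (r2 + r3))
      by (apply (conv3_transfer n rho); rewrite ?plus_INR; lra || lia).
    assert (2 * 2 ^ r3 <= 2 ^ (r2 + r3))
      by (rewrite pow_add; pose proof (pow_le 2 r3); pose proof (Rle_pow 2 1 r2 ltac:(lra) ltac:(lia));
          simpl in *; nra).
    lra.
Qed.
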